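(* Let $h>0$. The function $C_{\min}^{-1}h^{-d}\mathcal{F}_h$ is a self-concordant barrier for $\mathcal{Q}_h$ with parameter $\nu(h)=O(h^{-d})$.
   Context: $\Omega\subset\mathbb{R}^d$ bounded open domain; $Q=\{(q,s):s\ge\Lambda(q)\}$ with $\Lambda$ convex continuous; $F$ is a $\nu$-self-concordant barrier for $Q$, i.e. $|F'''(z)[u^3]|\le2(F''(z)[u^2])^{3/2}$ and $|F'(z)[u]|\le\sqrt\nu(F''(z)[u^2])^{1/2}$, and a self-concordant barrier with parameter $\mu$ means the same with $\nu$ replaced by $\mu$. $T_h$ is a quasi-uniform simplicial triangulation of $\Omega$ with quadrature $\int_\Omega^{(h)}\eta=\sum_{K\in T_h}\sum_{k=1}^\beta\omega_{K,k}\eta|_K(x_{K,k})$ with positive weights satisfying $C_{\min}h^d\le\omega_{K,k}\le C_{\max}h^d$ for constants $0<C_{\min}<1<C_{\max}$ independent of $h$. $V_h$ is a piecewise polynomial finite element space on $T_h$, $\mathcal{Q}_h=\{v\in V_h: v(x_{K,k})\in Q\ \text{for all }K\in T_h,\ k=1,\dots,\beta\}$ and $\mathcal{F}_h(w)=\int_\Omega^{(h)}F(w(x))$. The $O(\cdot)$ constant is independent of $h$. *)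

From HB Require Import structures.
From mathcomp Require Import all_boot all_order all_algebra.
From mathcomp Require Import all_classical all_reals all_analysis.
Set Implicit Arguments. Unset Strict Implicit. Unset Printing Implicit Defensive.
Import Order.TTheory GRing.Theory Num.Theory.
Import numFieldNormedType.Exports.
Local Open Scope classical_set_scope.
Local Open Scope ring_scope.

Section Defs.
Variable R : realType.

Definition line_restr n (F : 'rV[R]_n -> R) (z u : 'rV[R]_n) : R -> R :=
  fun t => F (z + t *: u).

(* Here F^(k)(z)[u^k] is the k-th derivative at t = 0 of t |-> F(z + t u). *)
Definition self_concordant_barrier n (S : set 'rV[R]_n) (F : 'rV[R]_n -> R)
    (nu : R) : Prop :=
  forall z u : 'rV[R]_n, interior S z ->
    let phi := line_restr F z u in
    [/\ derivable phi 0 1, derivable (derive1 phi) 0 1 & derivable (derive1n 2 phi) 0 1]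
    /\ [/\ 0 <= derive1n 2 phi 0,
        `|derive1n 3 phi 0| <= 2 * powR (derive1n 2 phi 0) (3%:R / 2%:R)
      & `|derive1 phi 0| <= Num.sqrt nu * Num.sqrt (derive1n 2 phi 0)].

Definition enorm d (x : 'rV[R]_d) : R := Num.sqrt (\sum_(i < d) x 0 i ^+ 2).

Definition ebounded d (A : set 'rV[R]_d) : Prop :=
  exists B : R, forall x, A x -> enorm x <= B.

Definition affinely_independent d (v : 'I_d.+1 -> 'rV[R]_d) : Prop :=
  \det (\matrix_(i < d, j < d) (v (lift ord0 i) 0 j - v ord0 0 j)) != 0.

Definition simplex_set d (v : 'I_d.+1 -> 'rV[R]_d) : set 'rV[R]_d :=
  [set x | exists l : 'I_d.+1 -> R,
     [/\ forall i, 0 <= l i, \sum_i l i = 1 & x = \sum_i l i *: v i]].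

Definition common_face d (v w : 'I_d.+1 -> 'rV[R]_d) : set 'rV[R]_d :=
  [set x | exists l : 'I_d.+1 -> R,
     [/\ forall i, 0 <= l i, \sum_i l i = 1,
         (forall i, l i != 0 -> exists j, w j = v i) & x = \sum_i l i *: v i]].

Definition is_triangulation d (Om : set 'rV[R]_d) M
    (T : 'I_M -> 'I_d.+1 -> 'rV[R]_d) : Prop :=
  [/\ forall K, affinely_independent (T K),
      [set x | exists K, simplex_set (T K) x] = closure Om,
      forall K L, K != L ->
        interior (simplex_set (T K)) `&` interior (simplex_set (T L)) = set0
    & forall K L, K != L ->
        simplex_set (T K) `&` simplex_set (T L) = common_face (T K) (T L)].

Definition quasi_uniform d M (rho h : R) (T : 'I_M -> 'I_d.+1 -> 'rV[R]_d) : Prop :=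
  forall K,
    (forall x y, simplex_set (T K) x -> simplex_set (T K) y -> enorm (x - y) <= h)
    /\ exists c, forall x, enorm (x - c) <= rho * h -> simplex_set (T K) x.

Definition poly_fun d (f : 'rV[R]_d -> R) : Prop :=
  exists s : seq (R * ('I_d -> nat)),
    forall x, f x = \sum_(a <- s) a.1 * \prod_(i < d) x 0 i ^+ a.2 i.

(* V_h is spanned by the linearly independent piecewise polynomial functions
   phi_1..phi_N; phi j K is the (vector valued) polynomial phi_j|_K. *)
Definition fe_eval d m M N (phi : 'I_N -> 'I_M -> 'rV[R]_d -> 'rV[R]_m)
    (c : 'rV[R]_N) (K : 'I_M) (x : 'rV[R]_d) : 'rV[R]_m :=
  \sum_(j < N) c 0 j *: phi j K x.

Definition fe_space d m M N (T : 'I_M -> 'I_d.+1 -> 'rV[R]_d)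
    (phi : 'I_N -> 'I_M -> 'rV[R]_d -> 'rV[R]_m) : Prop :=
  (forall j K (a : 'I_m), poly_fun (fun x => phi j K x 0 a))
  /\ (forall c : 'rV[R]_N,
        (forall K x, simplex_set (T K) x -> fe_eval phi c K x = 0) -> c = 0).

Definition convex_fun p (Lam : 'rV[R]_p -> R) : Prop :=
  forall (x y : 'rV[R]_p) (t : R), 0 <= t <= 1 ->
    Lam ((1 - t) *: x + t *: y) <= (1 - t) * Lam x + t * Lam y.

Definition epi_set p (Lam : 'rV[R]_p -> R) : set 'rV[R]_(p + 1) :=
  [set z | Lam (lsubmx z) <= rsubmx z 0 0].

(* Q_h, in the coordinates c of v = sum_j c_j phi_j *)
Definition Qh d m M N beta (Q : set 'rV[R]_m)
    (phi : 'I_N -> 'I_M -> 'rV[R]_d -> 'rV[R]_m)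
    (xq : 'I_M -> 'I_beta -> 'rV[R]_d) : set 'rV[R]_N :=
  [set c | forall K k, Q (fe_eval phi c K (xq K k))].

(* F_h(w) = int^(h) F(w(x)) *)
Definition Fh d m M N beta (F : 'rV[R]_m -> R)
    (phi : 'I_N -> 'I_M -> 'rV[R]_d -> 'rV[R]_m)
    (xq : 'I_M -> 'I_beta -> 'rV[R]_d) (om : 'I_M -> 'I_beta -> R)
    (c : 'rV[R]_N) : R :=
  \sum_(K < M) \sum_(k < beta) om K k * F (fe_eval phi c K (xq K k)).

End Defs.

From HB Require Import structures.
From mathcomp Require Import all_boot all_order all_algebra.
From mathcomp Require Import all_classical all_reals all_analysis.
From mathcomp Require Import ring lra zify.
Set Implicit Arguments. Unset Strict Implicit. Unset Printing Implicit Defensive.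
Import Order.TTheory GRing.Theory Num.Theory.
Import numFieldNormedType.Exports.
Local Open Scope classical_set_scope.
Local Open Scope ring_scope.

(* Along a line c + t u, the scaled discrete barrier is a finite sum
   sum_q w_q F(z_q + t v_q) with weights w_q = om_q / (Cmin h^d) >= 1, so its
   derivatives are the weighted sums of those of F.  Weights >= 1 preserve the
   third-derivative bound, and Cauchy-Schwarz gives the first-derivative bound
   with parameter nu sum_q w_q <= nu (Cmax / Cmin) beta M.  Quasi-uniformity
   gives each element a cube of side ~ rho h; these cubes have disjoint
   interiors inside the bounded domain, so a grid count gives M = O(h^-d). *)

Section LineDerivatives.
Variable R : realType.

Lemma derive1_shift (f : R -> R) t :
  derive1 (fun s => f (t + s)) = fun s => derive1 f (t + s).
Proof.
by apply/funext => s; rewrite /derive1; under eq_fun do rewrite addrCA.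
Qed.

Lemma derivable_shift (f : R -> R) t :
  derivable (fun s => f (t + s)) 0 1 -> derivable f t 1.
Proof.
rewrite /derivable; set g := (fun h : R => _); set g' := (fun h : R => _).
suff -> : g = g' by [].
by apply/funext => h; rewrite /g /g' /= !addr0 (addrC t).
Qed.

Lemma line_restr_shift n (F : 'rV[R]_n -> R) z u t :
  line_restr F (z + t *: u) u = fun s => line_restr F z u (t + s).
Proof. by apply/funext => s; rewrite /line_restr scalerDl addrA. Qed.

Lemma derivable3_line_restr n (S : set 'rV[R]_n) F nu z u t :
  self_concordant_barrier S F nu -> interior S (z + t *: u) ->
  let f := line_restr F z u in
  [/\ derivable f t 1, derivable (derive1 f) t 1
   & derivable (derive1 (derive1 f)) t 1].
Proof.
move=> FS /(FS _ u) [[d1 d2 d3] _] f.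
rewrite line_restr_shift -/f in d1 d2 d3; rewrite derive1nS derive1n1 in d3.
rewrite derive1_shift in d2 d3; rewrite derive1_shift in d3.
split; [exact: derivable_shift d1 | exact: derivable_shift d2
       | exact: derivable_shift d3].
Qed.

Lemma derivable_wsum_on (O : set R) (I : finType) (w : I -> R)
    (f : I -> R -> R) (g : R -> R) :
  open O -> (forall t, O t -> g t = \sum_i w i * f i t) ->
  (forall i t, O t -> derivable (f i) t 1) ->
  forall t, O t -> derivable g t 1 /\ derive1 g t = \sum_i w i * derive1 (f i) t.
Proof.
move=> oO gE fD t Ot.
have sumD : is_derive t 1 (\sum_i (w i \*: f i)) (\sum_i w i * derive1 (f i) t).
  elim/big_rec2 : _ => [|i y1 y2 _ IH]; first exact: is_derive_cst.
  apply: is_deriveD => //; rewrite derive1E.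
  by apply: is_deriveZ; apply/derivableP/fD.
have near_g : {near t, \sum_i (w i \*: f i) =1 g}.
  have : nbhs t O by exact: open_nbhs_nbhs.
  by apply: filterS => s Os; rewrite gE // fct_sumE.
split; first exact: near_eq_derivable near_g (@ex_derive _ _ _ _ _ _ _ sumD).
by rewrite derive1E -(near_eq_derive _ near_g) derive_val.
Qed.

End LineDerivatives.

Section WeightedSums.
Variable R : realType.
Implicit Types (I : finType).

Lemma powR32 (x : R) : 0 <= x -> powR x (3%:R / 2%:R) = x * Num.sqrt x.
Proof.
move=> x0; have -> : (3%:R / 2%:R : R) = 1 + 2^-1 by field.
by rewrite powRD ?powRr1 ?powR12_sqrt //; apply/implyP => /eqP; lra.
Qed.

Lemma ler_wsum_powR32 I (w x y : I -> R) :
  (forall i, 1 <= w i) -> (forall i, 0 <= x i) ->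
  (forall i, `|y i| <= 2 * powR (x i) (3%:R / 2%:R)) ->
  `|\sum_i w i * y i| <= 2 * powR (\sum_i w i * x i) (3%:R / 2%:R).
Proof.
move=> w1 x0 yx; set S := \sum_i w i * x i.
have w0 i : 0 <= w i by apply: le_trans (w1 i).
have S0 : 0 <= S by apply: sumr_ge0 => i _; apply: mulr_ge0.
(* w >= 1 gives x_i <= S, hence x_i^(3/2) <= x_i sqrt S *)
have xS i : x i <= S.
  apply: le_trans (_ : w i * x i <= S); first by rewrite ler_peMl.
  by rewrite /S (bigD1 i) //= lerDl sumr_ge0 // => j _; apply: mulr_ge0.
have -> : 2 * powR S (3%:R / 2%:R) = \sum_i w i * (2 * (x i * Num.sqrt S)).
  rewrite powR32 // {1}/S mulr_suml mulr_sumr.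
  by apply: eq_bigr => i _; ring.
apply: le_trans (ler_norm_sum _ _ _) (ler_sum _ _) => i _.
rewrite normrM (ger0_norm (w0 i)) ler_wpM2l //.
apply: le_trans (yx i) _; rewrite powR32 // ler_wpM2l // ler_wpM2l //.
by rewrite ler_sqrt.
Qed.

Lemma wsum_sqrt_le_sqrt I (w x : I -> R) :
  (forall i, 0 <= w i) -> (forall i, 0 <= x i) ->
  \sum_i w i * Num.sqrt (x i)
    <= Num.sqrt (\sum_i w i) * Num.sqrt (\sum_i w i * x i).
Proof.
move=> w0 x0; set W := \sum_i w i; set S := \sum_i w i * x i.
set T := \sum_i w i * Num.sqrt (x i).
have W0 : 0 <= W by apply: sumr_ge0.
have S0 : 0 <= S by apply: sumr_ge0 => i _; apply: mulr_ge0.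
have T0 : 0 <= T by apply: sumr_ge0 => i _; apply: mulr_ge0.
have [Wz|Wn0] := eqVneq W 0.
  rewrite /T big1 ?sqrtr_ge0 ?mulr_ge0 // => i _.
  by rewrite (psumr_eq0P (fun j _ => w0 j) Wz) ?mul0r.
have Wp : 0 < W by rewrite lt_def Wn0 W0.
(* Cauchy-Schwarz: the quadratic below is nonnegative, evaluate it at T / W *)
have expand l :
    \sum_i w i * (l - Num.sqrt (x i)) ^+ 2 = l ^+ 2 * W - 2 * l * T + S.
  rewrite /W /T /S !mulr_sumr -sumrN -!big_split /=.
  by apply: eq_bigr => i _; rewrite sqrrB sqr_sqrtr //; ring.
have TS : T ^+ 2 / W <= S.
  have : 0 <= \sum_i w i * (T / W - Num.sqrt (x i)) ^+ 2.
    by apply: sumr_ge0 => i _; rewrite mulr_ge0 ?sqr_ge0.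
  rewrite expand.
  have -> : (T / W) ^+ 2 * W - 2 * (T / W) * T = - (T ^+ 2 / W).
    by field; rewrite Wn0.
  lra.
rewrite -sqrtrM // -(ger0_norm T0) -sqrtr_sqr ler_sqrt ?mulr_ge0 //.
by rewrite -ler_pdivrMl // mulrC.
Qed.

Lemma ler_norm_wsum_sqrt I (w x e : I -> R) (nu : R) :
  (forall i, 0 <= w i) -> (forall i, 0 <= x i) ->
  (forall i, `|e i| <= Num.sqrt nu * Num.sqrt (x i)) ->
  `|\sum_i w i * e i|
    <= Num.sqrt (nu * \sum_i w i) * Num.sqrt (\sum_i w i * x i).
Proof.
move=> w0 x0 ex; rewrite [nu * _]mulrC sqrtrM ?sumr_ge0 //.
rewrite [_ * Num.sqrt nu]mulrC -mulrA.
apply: le_trans (ler_norm_sum _ _ _) _.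
apply: le_trans _ (ler_wpM2l (sqrtr_ge0 nu) (wsum_sqrt_le_sqrt w0 x0)).
rewrite mulr_sumr ler_sum // => i _; rewrite normrM ger0_norm // mulrCA.
exact: ler_wpM2l.
Qed.

Lemma scaled_weight_bounds (Cmin Cmax s o : R) : 0 < Cmin -> 0 < s ->
  Cmin * s <= o <= Cmax * s -> 1 <= Cmin^-1 * s^-1 * o <= Cmax / Cmin.
Proof.
move=> C0 s0 /andP[lo hi]; rewrite mulrC -invfM.
rewrite ler_pdivlMr ?ler_pdivrMr ?mulr_gt0 // mul1r lo /=.
by rewrite mulrA divfK ?gt_eqF.
Qed.

Lemma ler_mul_max0 (nu W C : R) : 0 <= W -> W <= C -> nu * W <= Num.max nu 0 * C.
Proof.
move=> W0 WC; apply: le_trans (_ : Num.max nu 0 * W <= _).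
  by rewrite ler_wpM2r // le_max lexx.
by rewrite ler_wpM2l // le_max lexx orbT.
Qed.

End WeightedSums.

Section Packing.
Variable R : realType.

Lemma coord_le_enorm d (x : 'rV[R]_d) i : `|x 0 i| <= enorm x.
Proof.
rewrite /enorm -sqrtr_sqr ler_sqrt; last by apply: sumr_ge0 => *; apply: sqr_ge0.
by rewrite (bigD1 i) //= lerDl sumr_ge0 // => j _; apply: sqr_ge0.
Qed.

Lemma enorm_le_coord d (x : 'rV[R]_d) r : (forall i, `|x 0 i| <= r) ->
  enorm x <= Num.sqrt (d%:R * r ^+ 2).
Proof.
move=> xr; rewrite /enorm ler_sqrt; last by apply: mulr_ge0; rewrite ?sqr_ge0.
rewrite mulr_natl -[X in _ *+ X]card_ord -sumr_const ler_sum // => i _.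
by rewrite -real_normK ?num_real // lerXn2r ?nnegrE ?(le_trans _ (xr i)).
Qed.

Lemma ball_rowP d (x y : 'rV[R]_d) e :
  ball x e y <-> 0 < e /\ forall i, `|x 0 i - y 0 i| < e.
Proof.
split=> -[e0 xy]; split=> //; first exact: xy 0.
by move=> i j; rewrite (ord1 i); apply: xy.
Qed.

Lemma dist_lt1_of_floor_eq (a b : R) : Num.floor a = Num.floor b -> `|a - b| < 1.
Proof.
move=> ab; have /andP[a1 a2] := floor_itv a; have /andP[b1 b2] := floor_itv b.
rewrite ab in a1 a2; rewrite ltr_norml; apply/andP; split; lra.
Qed.

Lemma card_le_of_separated d M (c : 'I_M -> 'rV[R]_d) (A : R) : 0 <= A ->
  (forall K i, `|c K 0 i| <= A) ->
  (forall K L, (forall i, `|c K 0 i - c L 0 i| < 1) -> K = L) ->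
  M%:R <= (2 * A + 2) ^+ d.
Proof.
move=> A0 cA sep; set f0 := Num.floor (- A).
(* label each point by the integer grid cell of its coordinates *)
set L := (`|Num.floor A - f0|%N).+1.
have cell K i : f0 <= Num.floor (c K 0 i) <= Num.floor A.
  by have := cA K i; rewrite ler_norml => /andP[? ?]; rewrite !le_floor.
pose n K i := absz (Num.floor (c K 0%R i) - f0).
have cell_lt K i : (n K i < L)%N.
  have /andP[c1 c2] := cell K i.
  by rewrite ltnS -lez_nat !gez0_abs ?subr_ge0 ?lerD2r // (le_trans c1).
pose idx K : {ffun 'I_d -> 'I_L} := [ffun i => inord (n K i)].
have idx_inj : injective idx.
  move=> K1 K2 /ffunP E; apply: sep => i; apply: dist_lt1_of_floor_eq.
  have := congr1 val (E i); rewrite !ffunE /= !inordK //.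
  move=> /(congr1 Posz); rewrite !gez0_abs ?subr_ge0; last 2 first.
  - by case/andP: (cell K2 i).
  - by case/andP: (cell K1 i).
  exact: addIr.
have LA : L%:R <= 2 * A + 2 :> R.
  rewrite /L -addn1 natrD natr_absz ger0_norm; last first.
    by rewrite subr_ge0 le_floor // (le_trans _ A0) // oppr_le0.
  have := floor_le A; have := floorD1_gt (- A); rewrite intrD /= intrB; lra.
apply: le_trans (_ : L%:R ^+ d <= _); last first.
  by rewrite lerXn2r ?nnegrE ?ler0n // (le_trans _ LA).
rewrite -natrX ler_nat; have := leq_card idx idx_inj.
by rewrite card_ffun !card_ord.
Qed.

Lemma quasi_uniform_cubes d M (rho h : R) (T : 'I_M -> 'I_d.+1 -> 'rV[R]_d) :
  0 < rho -> 0 < h -> quasi_uniform rho h T ->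
  exists c : 'I_M -> 'rV[R]_d, forall K (x : 'rV[R]_d),
    (forall i, `|x 0 i - c K 0 i| <= rho * h / d.+1%:R) -> simplex_set (T K) x.
Proof.
move=> rho0 h0 qu; have [c cball] := choice (fun K => proj2 (qu K)).
exists c => K x xc; apply: cball.
have xc' i : `|(x - c K) 0 i| <= rho * h / d.+1%:R by rewrite !mxE; apply: xc.
apply: le_trans (enorm_le_coord xc') _.
have dr : d%:R * (rho * h / d.+1%:R) ^+ 2 <= (rho * h) ^+ 2.
  rewrite expr_div_n mulrA ler_pdivrMr ?exprn_gt0 ?ltr0n // mulrC.
  by rewrite ler_pM2l ?exprn_gt0 ?mulr_gt0 // -natrX ler_nat; nia.
apply: le_trans (ler_wsqrtr dr) _.
by rewrite sqrtr_sqr ger0_norm // mulr_ge0 // ltW.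
Qed.

Lemma cube_centers_separated d (Om : set 'rV[R]_d) M
    (T : 'I_M -> 'I_d.+1 -> 'rV[R]_d) (c : 'I_M -> 'rV[R]_d) (r : R) :
  is_triangulation Om T -> 0 < r ->
  (forall K (x : 'rV[R]_d), (forall i, `|x 0 i - c K 0 i| <= r) ->
     simplex_set (T K) x) ->
  forall K L, (forall i, `|c K 0 i - c L 0 i| < r) -> K = L.
Proof.
move=> [_ _ disj _] r0 cube.
have inner K y : ball (c K) r y -> interior (simplex_set (T K)) y.
  move=> cKy; have : nbhs y (ball (c K) r).
    by apply: open_nbhs_nbhs; split; first exact: ball_open.
  apply: filterS => z /ball_rowP[_ cKz]; apply: cube => i.
  by rewrite distrC ltW.
move=> K L cKL; apply/eqP; apply/negPn/negP => /disj; rewrite -subset0; apply.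
by split; apply: inner; [apply/ball_rowP | apply: ballxx].
Qed.

Lemma closure_coord_le d (Om : set 'rV[R]_d) (B : R) :
  (forall x, Om x -> enorm x <= B) ->
  forall z, closure Om z -> forall i, `|z 0 i| <= B + 1.
Proof.
move=> OmB z /(_ _ (nbhsx_ballx z 1 ltr01))[x [Omx /ball_rowP[_ zx]]] i.
have := zx i; have := le_trans (coord_le_enorm x i) (OmB x Omx).
have : `|z 0 i| <= `|z 0 i - x 0 i| + `|x 0 i|.
  by rewrite -[X in `|X|](subrK (x 0 i)) ler_normD.
lra.
Qed.

Lemma card_triangulation_le d (Om : set 'rV[R]_d) (B rho h : R) M
    (T : 'I_M -> 'I_d.+1 -> 'rV[R]_d) :
  (forall x, Om x -> enorm x <= B) -> 0 < rho -> 0 < h ->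
  is_triangulation Om T -> quasi_uniform rho h T ->
  M%:R <= (4 * (`|B| + 1) * d.+1%:R / rho) ^+ d * h ^- d.
Proof.
move=> OmB rho0 h0 tri qu; set B1 := `|B| + 1; set r := rho * h / d.+1%:R.
have B10 : 0 < B1 by rewrite ltr_pwDr.
have r0 : 0 < r by rewrite divr_gt0 ?mulr_gt0 ?ltr0n.
have [c cube] := quasi_uniform_cubes rho0 h0 qu; rewrite -/r in cube.
have sep := cube_centers_separated tri r0 cube.
have cB1 K (x : 'rV[R]_d) :
    (forall i, `|x 0 i - c K 0 i| <= r) -> forall i, `|x 0 i| <= B1.
  move=> /(cube K x) Kx i; have [_ cover _ _] := tri.
  have : closure Om x by rewrite -cover; exists K.
  by move/(closure_coord_le OmB)/(_ i)/le_trans; apply; rewrite lerD2r ler_norm.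
have cKB1 K : forall i, `|c K 0 i| <= B1.
  by apply: (cB1 K (c K)) => j; rewrite subrr normr0 ltW.
set A := B1 / r.
have A0 : 0 < A by rewrite divr_gt0.
have -> : (4 * B1 * d.+1%:R / rho) ^+ d * h ^- d = (4 * A) ^+ d.
  rewrite -exprVn -exprMn /A /r; congr (_ ^+ _); field.
  by rewrite !gt_eqF // ltr0n.
have [M0|Mpos] := posnP M; first by rewrite M0 exprn_ge0 // mulr_ge0 // ltW.
apply: le_trans (_ : (2 * A + 2) ^+ d <= _).
  apply: (@card_le_of_separated _ _ (fun K => r^-1 *: c K)) (ltW A0) _ _
    => [K i|K L cKL].
    by rewrite mxE normrM gtr0_norm ?invr_gt0 // mulrC ler_pM2r ?invr_gt0.
  apply: sep => i; have := cKL i.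
  rewrite !mxE -mulrBr normrM gtr0_norm ?invr_gt0 //.
  by rewrite mulrC ltr_pdivrMr // mul1r.
have [d0|dpos] := posnP d; first by rewrite d0 !expr0.
(* some element exists, and its cube of half-side r fits in [-B1, B1]^d *)
have rB1 : r <= B1.
  pose K0 : 'I_M := Ordinal Mpos; pose i0 : 'I_d := Ordinal dpos.
  pose up := c K0 + const_mx r; pose dn := c K0 - const_mx r.
  have up_near i : `|up 0 i - c K0 0 i| <= r.
    by rewrite !mxE addrAC subrr add0r gtr0_norm.
  have dn_near i : `|dn 0 i - c K0 0 i| <= r.
    by rewrite !mxE addrAC subrr add0r normrN gtr0_norm.
  have := cB1 K0 up up_near i0; have := cB1 K0 dn dn_near i0.
  by rewrite !mxE !ler_norml => /andP[dn1 _] /andP[_ up2]; lra.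
have A1 : 1 <= A by rewrite /A ler_pdivlMr // mul1r.
by rewrite lerXn2r ?nnegrE; lra.
Qed.

End Packing.

Section Barriers.
Variable R : realType.

Lemma self_concordant_barrier_le n (S : set 'rV[R]_n) F (nu nu' : R) :
  nu <= nu' -> self_concordant_barrier S F nu -> self_concordant_barrier S F nu'.
Proof.
move=> nn' SF z u /(SF z u)[D [d2 d3 d1]]; split=> //; split=> //.
by apply: le_trans d1 _; rewrite ler_wpM2r ?sqrtr_ge0 ?ler_wsqrtr.
Qed.

Lemma self_concordant_barrier_wsum m n (I : finType) (S : set 'rV[R]_m)
    (S' : set 'rV[R]_n) F nu (w : I -> R) (A : I -> 'rV[R]_n -> 'rV[R]_m) :
  self_concordant_barrier S F nu -> (forall i, 1 <= w i) ->
  (forall i c u t, A i (c + t *: u) = A i c + t *: A i u) ->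
  (forall c, interior S' c -> forall i, interior S (A i c)) ->
  self_concordant_barrier S' (fun c => \sum_i w i * F (A i c)) (nu * \sum_i w i).
Proof.
move=> FS w1 A_line S'S c u c_in g.
have w0 i : 0 <= w i by apply: le_trans (w1 i).
pose f i := line_restr F (A i c) (A i u).
have gE t : g t = \sum_i w i * f i t.
  by apply: eq_bigr => i _; rewrite A_line.
pose O := [set t : R | interior S' (c + t *: u)].
have O_open : open O.
  apply: (@open_comp _ _ (fun t : R => c + t *: u)); last exact: open_interior.
  by move=> t _; apply: cvgD (cvg_cst c) (@scalel_continuous _ _ u t).
have O0 : O 0 by rewrite /O /= scale0r addr0.
have fD i t : O t -> [/\ derivable (f i) t 1, derivable (derive1 (f i)) t 1
    & derivable (derive1 (derive1 (f i))) t 1].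
  by move=> /S'S /(_ i); rewrite A_line; apply: derivable3_line_restr FS.
have fD1 i t : O t -> derivable (f i) t 1 by case/(fD i).
have fD2 i t : O t -> derivable (derive1 (f i)) t 1 by case/(fD i).
have fD3 i t : O t -> derivable (derive1 (derive1 (f i))) t 1 by case/(fD i).
have g1 := derivable_wsum_on O_open (fun t _ => gE t) fD1.
have g2 := derivable_wsum_on O_open (fun t Ot => (g1 t Ot).2) fD2.
have g3 := derivable_wsum_on O_open (fun t Ot => (g2 t Ot).2) fD3.
split.
  by split; [exact: (g1 0 O0).1 | exact: (g2 0 O0).1 | exact: (g3 0 O0).1].
have Ff i := (FS (A i c) (A i u) (S'S c c_in i)).2.
have -> : derive1n 2 g = derive1 (derive1 g) by [].
have -> : derive1n 3 g = derive1 (derive1 (derive1 g)) by [].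
rewrite (g1 0 O0).2 (g2 0 O0).2 (g3 0 O0).2; split.
- by apply: sumr_ge0 => i _; rewrite mulr_ge0 //; case: (Ff i).
- by apply: ler_wsum_powR32 => // i; case: (Ff i).
- by apply: ler_norm_wsum_sqrt => // i; case: (Ff i).
Qed.

End Barriers.

Section FiniteElements.
Variables (R : realType) (d m M N beta : nat).
Variable phi : 'I_N -> 'I_M -> 'rV[R]_d -> 'rV[R]_m.

Lemma fe_eval_line (c u : 'rV[R]_N) t K x :
  fe_eval phi (c + t *: u) K x = fe_eval phi c K x + t *: fe_eval phi u K x.
Proof.
rewrite /fe_eval scaler_sumr -big_split /=.
by apply: eq_bigr => j _; rewrite !mxE scalerDl scalerA.
Qed.

Lemma scaled_Fh_wsum (F : 'rV[R]_m -> R) (xq : 'I_M -> 'I_beta -> 'rV[R]_d)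
    (om : 'I_M -> 'I_beta -> R) (a : R) c :
  a * Fh F phi xq om c
    = \sum_(q : 'I_M * 'I_beta)
        a * om q.1 q.2 * F (fe_eval phi c q.1 (xq q.1 q.2)).
Proof.
by rewrite /Fh pair_bigA mulr_sumr; apply: eq_bigr => q _; rewrite mulrA.
Qed.

End FiniteElements.

Theorem mainTheorem5 (R : realType) (d p : nat) (Om : set 'rV[R]_d)
    (Lam : 'rV[R]_p -> R) (F : 'rV[R]_(p + 1) -> R) (nu rho : R)
    (beta : nat) (Cmin Cmax : R) :
  open Om -> connected Om -> ebounded Om ->
  convex_fun Lam -> continuous Lam ->
  self_concordant_barrier (epi_set Lam) F nu ->
  0 < Cmin < 1 -> 1 < Cmax -> 0 < rho ->
  exists nuh : R -> R,
    (exists C : R, forall h : R, 0 < h -> nuh h <= C * h ^- d) /\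
    forall h : R, 0 < h ->
    forall (M : nat) (T : 'I_M -> 'I_d.+1 -> 'rV[R]_d)
           (xq : 'I_M -> 'I_beta -> 'rV[R]_d) (om : 'I_M -> 'I_beta -> R)
           (N : nat) (phi : 'I_N -> 'I_M -> 'rV[R]_d -> 'rV[R]_(p + 1)),
      is_triangulation Om T ->
      quasi_uniform rho h T ->
      (forall K k, simplex_set (T K) (xq K k)) ->
      (forall K k, Cmin * h ^+ d <= om K k <= Cmax * h ^+ d) ->
      fe_space T phi ->
      (forall c, interior (Qh (epi_set Lam) phi xq) c ->
         forall K k, interior (epi_set Lam) (fe_eval phi c K (xq K k))) ->
      self_concordant_barrier (Qh (epi_set Lam) phi xq)
        (fun c => Cmin^-1 * h ^- d * Fh F phi xq om c) (nuh h).
Proof.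
move=> _ _ [B OmB] _ _ FS /andP[Cmin0 _] Cmax1 rho0.
set Cmesh := (4 * (`|B| + 1) * d.+1%:R / rho) ^+ d.
set C := Num.max nu 0 * (Cmax / Cmin * beta%:R * Cmesh).
exists (fun h => C * h ^- d); split; first by exists C.
move=> h h0 M T xq om N phi tri qu _ om_bd _ inner.
pose w (q : 'I_M * 'I_beta) := Cmin^-1 * h ^- d * om q.1 q.2.
have w_bd q : 1 <= w q <= Cmax / Cmin.
  by apply: scaled_weight_bounds; rewrite ?exprn_gt0.
have -> : (fun c => Cmin^-1 * h ^- d * Fh F phi xq om c)
    = fun c => \sum_q w q * F (fe_eval phi c q.1 (xq q.1 q.2)).
  by apply/funext => c; apply: scaled_Fh_wsum.
apply: self_concordant_barrier_le (self_concordant_barrier_wsum FS _ _ _).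
- rewrite /C -mulrA; apply: ler_mul_max0.
    by apply: sumr_ge0 => q _; case/andP: (w_bd q) => /(le_trans ler01).
  apply: le_trans (_ : \sum_(q : 'I_M * 'I_beta) Cmax / Cmin <= _).
    by apply: ler_sum => q _; case/andP: (w_bd q).
  rewrite sumr_const card_prod !card_ord -[_ *+ _]mulr_natr natrM.
  have -> : Cmax / Cmin * beta%:R * Cmesh * h ^- d
      = Cmax / Cmin * (beta%:R * (Cmesh * h ^- d)) by rewrite !mulrA.
  rewrite ler_pM2l ?divr_gt0 ?(lt_trans ltr01 Cmax1) // mulrC.
  by apply: ler_wpM2l; [exact: ler0n | exact: card_triangulation_le tri qu].
- by move=> q; case/andP: (w_bd q).
- by move=> q c u t; rewrite fe_eval_line.
- by move=> c /inner + q; apply.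
Qed.
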